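(* Let $A$ be a Type I$_k$ weight matrix with $V_A$ faithful, and consider the Hilbert map $\Pi:V_A\to\mathbb R^\ell\times\mathbb C^{k^2}\times\mathbb C^N$, $\boldsymbol z\mapsto\big((r_i(\boldsymbol z))_i,(p_{i,j}(\boldsymbol z))_{i,j},(q_{\boldsymbol s}(\boldsymbol z))_{\boldsymbol s}\big)$, $N=\binom{\alpha+k-1}{k-1}$ (whose real and imaginary parts form a real Hilbert basis). Then $\Pi(Z_A)$ equals the set of tuples $(r_i,p_{i,j},q_{\boldsymbol s})$ such that $p_{i,j}=\overline{p_{j,i}}$ for all $i,j$, the relations (1)–(6) of Proposition 4.2 hold (with $R_i,P_{i,j},Q_{\boldsymbol s},\overline Q_{\boldsymbol s}$ evaluated at $r_i,p_{i,j},q_{\boldsymbol s},\overline{q_{\boldsymbol s}}$, the latter being the complex conjugate of $q_{\boldsymbol s}$), the moment map relations $-a_ir_i+n_i\sum_{j=1}^kp_{j,j}=0$ hold for $i=1,\dots,\ell$, and the inequalities $r_i\ge0$ ($1\le i\le\ell$) and $p_{j,j}\ge0$ ($1\le j\le k$) hold.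
   Context: Type I$_k$: $A=[D,\boldsymbol n,\dots,\boldsymbol n]\in\mathbb Z^{\ell\times(\ell+k)}$ with $D=\operatorname{diag}(-a_1,\dots,-a_\ell)$, $a_i>0$, $\boldsymbol n=(n_1,\dots,n_\ell)^T$, $n_i>0$; $V_A=\mathbb C^{\ell+k}$ with $\mathbb T^\ell$ acting by $z_j\mapsto\prod_it_i^{a_{ij}}z_j$, faithful = effective; shell $Z_A$ = common zero set of $\tfrac12\sum_ja_{ij}z_j\overline{z_j}$. $\alpha=\operatorname{lcm}(a_i)$, $m_i=n_i\alpha/a_i$. Invariants $r_i=z_i\overline{z_i}$, $p_{i,j}=z_{\ell+i}\overline{z_{\ell+j}}$, $q_{\boldsymbol s}=\prod_{i\le\ell}z_i^{m_i}\prod_{i\le k}z_{\ell+i}^{s_i}$ ($\boldsymbol s\in\mathbb Z^k_{\ge0}$, $\sum s_i=\alpha$). Relations of Proposition 4.2: (1) $P_{g,h}P_{i,j}-P_{g,j}P_{i,h}$; (2) $P_{g,h}Q_{\boldsymbol s}-P_{i,h}Q_{\boldsymbol s'}$ with $s'_g=s_g+1$, $s'_i=s_i-1$, other entries equal; (3) $P_{g,h}\overline Q_{\boldsymbol s}-P_{g,i}\overline Q_{\boldsymbol s'}$ with $s'_h=s_h+1$, $s'_i=s_i-1$, other entries equal; (4) $Q_{\boldsymbol s}Q_{\boldsymbol s'}-Q_{\boldsymbol t}Q_{\boldsymbol t'}$ and (5) $\overline Q_{\boldsymbol s}\overline Q_{\boldsymbol s'}-\overline Q_{\boldsymbol t}\overline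 Q_{\boldsymbol t'}$ whenever $\boldsymbol s+\boldsymbol s'=\boldsymbol t+\boldsymbol t'$; (6) $\prod_iR_i^{m_i}\prod_{j=1}^\alpha P_{g_j,h_j}-Q_{\boldsymbol s}\overline Q_{\boldsymbol s'}$, where $g$ appears $s_g$ times among the $g_j$ and $h$ appears $s'_h$ times among the $h_j$. *)

(* The complex numbers are modelled by an arbitrary
   numClosedFieldType C (e.g. algC). *)
From HB Require Import structures.
From mathcomp Require Import all_boot all_order all_algebra.
Set Implicit Arguments. Unset Strict Implicit. Unset Printing Implicit Defensive.
Import Order.TTheory GRing.Theory Num.Theory.
Local Open Scope ring_scope.

Definition typeI_matrix (l k : nat) (a n : 'I_l -> nat) : 'M[int]_(l, l + k) :=
  \matrix_(i < l, j < l + k)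
    match split j with
    | inl j' => if i == j' then - (a i)%:Z else 0
    | inr _ => (n i)%:Z
    end.

(* Faithfulness of the torus action z_j |-> (prod_i t_i^(a_ij)) z_j of
   T^l = {t : |t_i| = 1} on V_A = C^(l+k): only t = 1 acts trivially. *)
Definition faithful_rep (C : numClosedFieldType) (l m : nat) (A : 'M[int]_(l, m)) : Prop :=
  forall t : 'I_l -> C, (forall i, `|t i| = 1) ->
    (forall j : 'I_m, \prod_(i < l) (t i) ^ (A i j) = 1) ->
    forall i, t i = 1.

Definition shell (C : numClosedFieldType) (l m : nat) (A : 'M[int]_(l, m))
  (z : 'I_m -> C) : Prop :=
  forall i : 'I_l, 2^-1 * \sum_(j < m) (A i j)%:~R * (z j * (z j)^*) = 0.

Definition alphaA (l : nat) (a : 'I_l -> nat) : nat := \big[lcmn/1%N]_(i < l) a i.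
Definition mA (l : nat) (a n : 'I_l -> nat) (i : 'I_l) : nat :=
  (n i * alphaA a %/ a i)%N.

Definition rinv (C : numClosedFieldType) (l k : nat) (z : 'I_(l + k) -> C)
  (i : 'I_l) : C := z (lshift k i) * (z (lshift k i))^*.
Definition pinv (C : numClosedFieldType) (l k : nat) (z : 'I_(l + k) -> C)
  (i j : 'I_k) : C := z (rshift l i) * (z (rshift l j))^*.
Definition qinv (C : numClosedFieldType) (l k : nat) (a n : 'I_l -> nat)
  (z : 'I_(l + k) -> C) (s : 'I_k -> nat) : C :=
  (\prod_(i < l) z (lshift k i) ^+ mA a n i) * \prod_(i < k) z (rshift l i) ^+ s i.

Definition admissible (l k : nat) (a : 'I_l -> nat) (s : 'I_k -> nat) : Prop :=
  (\sum_(i < k) s i)%N = alphaA a.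

From HB Require Import structures.
From mathcomp Require Import all_boot all_order all_algebra.
From mathcomp Require Import ring zify.
Import Order.TTheory GRing.Theory Num.Theory.
Local Open Scope ring_scope.

Set Implicit Arguments. Unset Strict Implicit. Unset Printing Implicit Defensive.

(** Every relation holds identically on the image of the Hilbert map, and the
moment map relations are the equations of the shell.  Conversely, (1) and the
positivity of the diagonal make the hermitian matrix (p_ij) positive
semidefinite of rank at most one, so p_ij = w_i conj(w_j); with c_i = sqrt(r_i)
the point z0 = (c, w) has the prescribed r and p, and (6) says
q_s conj(q_s') = q_s(z0) conj(q_s'(z0)).  Hence q = u q(z0) for some |u| = 1.
Multiplying w by an alpha-th root mu of u changes neither r nor p and multiplies
each q_s(z0) by mu^alpha = u, since |s| = alpha. *)

Lemma exists_fiber_card (I : finType) (s : I -> nat) (N : nat) :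
  (\sum_x s x)%N = N -> exists gs : 'I_N -> I, forall x, s x = #|[pred j | gs j == x]|.
Proof.
move=> sum_s; pose t := in_tuple (flatten [seq nseq (s x) x | x <- enum I]).
have size_t : size t = N.
  rewrite size_flatten /shape -map_comp sumnE big_map big_enum -sum_s.
  by apply: eq_bigr => x _; rewrite /= size_nseq.
rewrite -size_t; exists (tnth t) => x.
rewrite -sum1_card (eq_bigl (fun j => tnth t j == x)) //.
rewrite -(big_tuple _ _ t (pred1 x) (fun=> 1%N)) sum1_count.
rewrite count_flatten -map_comp sumnE big_map big_enum /= (bigD1 x) //=.
rewrite count_nseq /= eqxx mul1n big1 ?addn0 // => y /negbTE yx.
by rewrite /= count_nseq /= yx.
Qed.

Section Monomials.
Variables (R : comNzRingType) (I : finType).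
Implicit Types (v w : I -> R) (s t : I -> nat).

Definition monomial w s : R := \prod_x w x ^+ s x.

Lemma monomialD w s t :
  monomial w (fun x => s x + t x)%N = monomial w s * monomial w t.
Proof. by rewrite -big_split; apply: eq_bigr => x _; rewrite exprD. Qed.

Lemma eq_monomial w s t : s =1 t -> monomial w s = monomial w t.
Proof. by move=> eq_st; apply: eq_bigr => x _; rewrite eq_st. Qed.

Lemma monomialM v w s :
  monomial (fun x => v x * w x) s = monomial v s * monomial w s.
Proof. by rewrite -big_split; apply: eq_bigr => x _; rewrite exprMn. Qed.

Lemma monomial_const (c : R) s : monomial (fun=> c) s = c ^+ (\sum_x s x).
Proof. exact: prodrXr. Qed.

Lemma monomialZ (c : R) w s :
  monomial (fun x => c * w x) s = c ^+ (\sum_x s x) * monomial w s.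
Proof. by rewrite monomialM monomial_const. Qed.

Lemma monomial_delta w g : monomial w (fun x => (x == g) : nat) = w g.
Proof.
rewrite /monomial (bigD1 g) //= eqxx expr1 big1 ?mulr1 // => x /negbTE->.
exact: expr0.
Qed.

Lemma monomial_exchange w (g i : I) s s' :
  s' g = (s g).+1 -> s i = (s' i).+1 -> (forall x, x != g -> x != i -> s' x = s x) ->
  w g * monomial w s = w i * monomial w s'.
Proof.
move=> s'g si s'x; rewrite -monomial_delta -[w i]monomial_delta -!monomialD.
apply: eq_monomial => x /=; have [->|xg] := eqVneq x g.
  by have [gi|_] := eqVneq g i; [move: s'g si; rewrite gi; lia | rewrite s'g; lia].
by have [->|xi] := eqVneq x i; [rewrite si; lia | rewrite s'x].
Qed.

Lemma prod_monomial N w (gs : 'I_N -> I) s :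
  (forall x, s x = #|[pred j | gs j == x]|) -> \prod_(j < N) w (gs j) = monomial w s.
Proof.
move=> s_card; rewrite (partition_big gs predT) //; apply: eq_bigr => x _.
rewrite s_card -prodr_const; apply: eq_big => [j|j /andP[_ /eqP->]] //.
Qed.

End Monomials.

Lemma rmorph_monomial (R S : comNzRingType) (I : finType)
  (f : {rmorphism R -> S}) (w : I -> R) (s : I -> nat) :
  f (monomial w s) = monomial (fun x => f (w x)) s.
Proof. by rewrite rmorph_prod; apply: eq_bigr => x _; rewrite rmorphXn. Qed.

Lemma monomial_eq0_dichotomy (R : idomainType) (I : finType) (w : I -> R) N :
  (0 < N)%N ->
  (exists2 s, (\sum_x s x)%N = N & monomial w s != 0) \/
  (forall s, (\sum_x s x)%N = N -> monomial w s = 0).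
Proof.
move=> N_gt0; have [j0 /= wj0 | w0] := pickP (fun j => w j != 0).
  left; exists (fun x => if x == j0 then N else 0%N).
    by rewrite (bigD1 j0) //= eqxx big1 ?addn0 // => x /negbTE->.
  rewrite /monomial (bigD1 j0) //= eqxx big1 ?mulr1 ?expf_neq0 // => x /negbTE->.
  exact: expr0.
right=> s sum_s; rewrite /monomial (eq_bigr (fun x => 0 ^+ s x)) => [|x _].
  by rewrite prodrXr sum_s expr0n eqn0Ngt N_gt0.
by have /negbFE/eqP-> := w0 x.
Qed.

Lemma psd_rank1_factor (C : numClosedFieldType) (I : finType) (p : I -> I -> C) :
  (forall i j, p i j = (p j i)^*) ->
  (forall g h i j, p g h * p i j = p g j * p i h) ->
  (forall i, 0 <= p i i) ->
  exists w : I -> C, forall i j, p i j = w i * (w j)^*.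
Proof.
move=> p_herm p_minor p_psd.
have [j0 /= pj0 | p_diag0] := pickP (fun j => p j j != 0); last first.
  exists (fun=> 0) => i j; rewrite mul0r; apply/eqP.
  rewrite -mul_conjC_eq0 -p_herm p_minor.
  by have /negbFE/eqP-> := p_diag0 i; rewrite mul0r.
pose d := sqrtC (p j0 j0).
have d_real : d^* = d by rewrite geC0_conj // sqrtC_ge0.
have d2 : d * d = p j0 j0 by rewrite -expr2 sqrtCK.
exists (fun i => p i j0 / d) => i j.
rewrite rmorphM fmorphV /= d_real -p_herm mulrACA -invfM d2 p_minor.
by rewrite mulfK.
Qed.

(* The dichotomy on g stands in for deciding whether g vanishes on P, which is
   not possible for an arbitrary predicate on an arbitrary type. *)
Lemma phase_of_mul_conj (C : numClosedFieldType) (T : Type) (P : T -> Prop) (f g : T -> C) :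
  (forall x y, P x -> P y -> f x * (f y)^* = g x * (g y)^*) ->
  (exists2 x0, P x0 & g x0 != 0) \/ (forall x, P x -> g x = 0) ->
  exists2 u : C, `|u| = 1 & forall x, P x -> f x = u * g x.
Proof.
move=> fg [[x0 Px0 gx0] | g0]; last first.
  exists 1 => [|x Px]; first exact: normr1.
  by apply/eqP; rewrite g0 // mulr0 -mul_conjC_eq0 fg // g0 // mul0r.
have fx0 : f x0 != 0 by rewrite -mul_conjC_eq0 fg // mul_conjC_eq0.
exists (f x0 / g x0) => [|x Px].
  apply/eqP; rewrite -(pexpr_eq1 (n := 2)) ?normr_ge0 // normCK rmorphM fmorphV /=.
  by rewrite mulrACA -invfM fg // divff // mul_conjC_eq0.
have cfx0 : (f x0)^* != 0 by rewrite conjC_eq0.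
apply: (mulIf cfx0); rewrite fg //.
transitivity (f x0 * (f x0)^* * g x / g x0); last by field.
by rewrite fg //; field.
Qed.

Lemma split_lshift m p (i : 'I_m) : split (lshift p i) = inl i.
Proof. exact: (unsplitK (inl i)). Qed.

Lemma split_rshift m p (j : 'I_p) : split (rshift m j) = inr j.
Proof. exact: (unsplitK (inr j)). Qed.

Lemma alphaA_gt0 l (a : 'I_l -> nat) : (forall i, 0 < a i)%N -> (0 < alphaA a)%N.
Proof.
move=> a_gt0; apply: (big_ind (fun x => 0 < x)%N) => // x y x_gt0 y_gt0.
by rewrite lcmn_gt0 x_gt0.
Qed.

Section TypeI.
Variables (C : numClosedFieldType) (l k : nat) (a n : 'I_l -> nat).
Implicit Types (z : 'I_(l + k) -> C) (s t : 'I_k -> nat).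

Lemma qinvE z s :
  qinv a n z s =
    monomial (fun i => z (lshift k i)) (mA a n) * monomial (fun j => z (rshift l j)) s.
Proof. by []. Qed.

Lemma shell_typeIE z :
  shell (typeI_matrix k a n) z <->
  forall i, - (a i)%:R * rinv z i + (n i)%:R * \sum_(j < k) pinv z j j = 0.
Proof.
have shell_sum i : \sum_(j < l + k) (typeI_matrix k a n i j)%:~R * (z j * (z j)^*)
    = - (a i)%:R * rinv z i + (n i)%:R * \sum_(j < k) pinv z j j.
  rewrite big_split_ord /= mulr_sumr (bigD1 i) //= big1 => [|j ji].
    rewrite addr0; congr (_ + _); first by rewrite mxE split_lshift eqxx rmorphN.
    by apply: eq_bigr => j _; rewrite mxE split_rshift.
  by rewrite mxE split_lshift eq_sym (negbTE ji) mul0r.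
rewrite /shell; split=> shell0 i; have := shell0 i; rewrite shell_sum.
  by move/eqP; rewrite mulf_eq0 invr_eq0 pnatr_eq0 => /eqP.
by move->; rewrite mulr0.
Qed.

Lemma pinv_conj z i j : (pinv z i j)^* = pinv z j i.
Proof. by rewrite rmorphM /= conjCK mulrC. Qed.

Lemma pinv_minor z g h i j : pinv z g h * pinv z i j = pinv z g j * pinv z i h.
Proof. by rewrite /pinv; ring. Qed.

Lemma pinv_qinv_exchange z g h i s s' :
  s' g = (s g).+1 -> s i = (s' i).+1 -> (forall x, x != g -> x != i -> s' x = s x) ->
  pinv z g h * qinv a n z s = pinv z i h * qinv a n z s'.
Proof.
move=> s'g si s'x; rewrite !qinvE /pinv.
have /= exch := monomial_exchange (fun j => z (rshift l j)) s'g si s'x.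
transitivity ((z (rshift l h))^* * monomial (fun i => z (lshift k i)) (mA a n) *
  (z (rshift l g) * monomial (fun j => z (rshift l j)) s)); first by ring.
by rewrite exch; ring.
Qed.

Lemma pinv_conj_qinv_exchange z g h i s s' :
  s' h = (s h).+1 -> s i = (s' i).+1 -> (forall x, x != h -> x != i -> s' x = s x) ->
  pinv z g h * (qinv a n z s)^* = pinv z g i * (qinv a n z s')^*.
Proof.
move=> s'h si s'x; rewrite -(pinv_conj z h g) -(pinv_conj z i g) -!rmorphM.
by rewrite (pinv_qinv_exchange _ _ s'h si s'x).
Qed.

Lemma qinv_mulC_exchange z s s' t t' :
  (forall x, s x + s' x = t x + t' x)%N ->
  qinv a n z s * qinv a n z s' = qinv a n z t * qinv a n z t'.
Proof.
move=> st; rewrite !qinvE mulrACA -(monomialD _ s) [RHS]mulrACA -(monomialD _ t).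
by rewrite (eq_monomial _ st).
Qed.

Lemma qinv_mul_conj N z (gs hs : 'I_N -> 'I_k) s s' :
  (forall x, s x = #|[pred j | gs j == x]|) ->
  (forall x, s' x = #|[pred j | hs j == x]|) ->
  (\prod_(i < l) rinv z i ^+ mA a n i) * \prod_(j < N) pinv z (gs j) (hs j)
    = qinv a n z s * (qinv a n z s')^*.
Proof.
move=> gs_s hs_s'.
have -> : \prod_(i < l) rinv z i ^+ mA a n i = monomial (fun i => z (lshift k i)) (mA a n)
    * monomial (fun i => (z (lshift k i))^*) (mA a n) by exact: monomialM.
rewrite big_split /= (prod_monomial (fun j => z (rshift l j)) gs_s).
rewrite (prod_monomial (fun j => (z (rshift l j))^*) hs_s').
by rewrite !qinvE rmorphM !rmorph_monomial mulrACA.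
Qed.

Lemma qinv_eq0_dichotomy z : (0 < alphaA a)%N ->
  (exists2 s, admissible a s & qinv a n z s != 0) \/
  (forall s, admissible a s -> qinv a n z s = 0).
Proof.
move=> alpha_gt0.
have [pref0|pref_neq0] := eqVneq (monomial (fun i => z (lshift k i)) (mA a n)) 0.
  by right=> s _; rewrite qinvE pref0 mul0r.
have [[s As m_neq0]|m0] := monomial_eq0_dichotomy (fun j => z (rshift l j)) alpha_gt0.
  by left; exists s; rewrite // qinvE mulf_neq0.
by right=> s As; rewrite qinvE m0 ?mulr0.
Qed.

Definition zcat (c : 'I_l -> C) (w : 'I_k -> C) : 'I_(l + k) -> C :=
  fun x => match split x with inl i => c i | inr j => w j end.

Lemma rinv_zcat c w i : rinv (zcat c w) i = c i * (c i)^*.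
Proof. by rewrite /rinv /zcat split_lshift. Qed.

Lemma pinv_zcat c w i j : pinv (zcat c w) i j = w i * (w j)^*.
Proof. by rewrite /pinv /zcat !split_rshift. Qed.

Lemma qinv_zcat c w s :
  qinv a n (zcat c w) s = monomial c (mA a n) * monomial w s.
Proof.
rewrite qinvE /zcat; congr (_ * _).
  by apply: eq_bigr => i _; rewrite split_lshift.
by apply: eq_bigr => j _; rewrite split_rshift.
Qed.

Definition in_hilbert_image rr pp qq : Prop :=
  exists z, shell (typeI_matrix k a n) z /\
    (forall i, rr i = rinv z i) /\ (forall i j, pp i j = pinv z i j) /\
    (forall s, admissible a s -> qq s = qinv a n z s).

Definition hilbert_relations (rr : 'I_l -> C) (pp : 'I_k -> 'I_k -> C)
    (qq : ('I_k -> nat) -> C) : Prop :=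
  (forall i j, pp i j = (pp j i)^*) /\
  (forall g h i j, pp g h * pp i j - pp g j * pp i h = 0) /\
  (forall (g h i : 'I_k) (s s' : 'I_k -> nat), admissible a s -> admissible a s' ->
    s' g = (s g).+1 -> s i = (s' i).+1 ->
    (forall x, x != g -> x != i -> s' x = s x) ->
    pp g h * qq s - pp i h * qq s' = 0) /\
  (forall (g h i : 'I_k) (s s' : 'I_k -> nat), admissible a s -> admissible a s' ->
    s' h = (s h).+1 -> s i = (s' i).+1 ->
    (forall x, x != h -> x != i -> s' x = s x) ->
    pp g h * (qq s)^* - pp g i * (qq s')^* = 0) /\
  (forall s s' t t' : 'I_k -> nat,
    admissible a s -> admissible a s' -> admissible a t -> admissible a t' ->
    (forall x, (s x + s' x = t x + t' x)%N) ->
    qq s * qq s' - qq t * qq t' = 0 /\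
    (qq s)^* * (qq s')^* - (qq t)^* * (qq t')^* = 0) /\
  (forall (gs hs : 'I_(alphaA a) -> 'I_k) (s s' : 'I_k -> nat),
    admissible a s -> admissible a s' ->
    (forall x, s x = #|[pred j | gs j == x]|) ->
    (forall x, s' x = #|[pred j | hs j == x]|) ->
    (\prod_(i < l) rr i ^+ mA a n i) * (\prod_(j < alphaA a) pp (gs j) (hs j))
      - qq s * (qq s')^* = 0) /\
  (forall i, - (a i)%:R * rr i + (n i)%:R * (\sum_(j < k) pp j j) = 0) /\
  (forall i, 0 <= rr i) /\ (forall j, 0 <= pp j j).

Lemma hilbert_relations_of_image rr pp qq :
  in_hilbert_image rr pp qq -> hilbert_relations rr pp qq.
Proof.
case=> z [z_shell [rr_z [pp_z qq_z]]].
split; first by move=> i j; rewrite !pp_z pinv_conj.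
split; first by move=> g h i j; rewrite !pp_z pinv_minor subrr.
split.
  move=> g h i s s' As As' s'g si s'x.
  by rewrite !pp_z !qq_z // (pinv_qinv_exchange _ _ s'g si s'x) subrr.
split.
  move=> g h i s s' As As' s'h si s'x.
  by rewrite !pp_z !qq_z // (pinv_conj_qinv_exchange _ _ s'h si s'x) subrr.
split.
  move=> s s' t t' As As' At At' st; rewrite !qq_z // -!rmorphM.
  by rewrite (qinv_mulC_exchange _ st) !subrr.
split.
  move=> gs hs s s' As As' gs_s hs_s'.
  under eq_bigr do rewrite rr_z.
  under [X in _ * X]eq_bigr do rewrite pp_z.
  by rewrite (qinv_mul_conj _ gs_s hs_s') !qq_z // subrr.
split.
  move=> i; rewrite rr_z (eq_bigr _ (fun j _ => pp_z j j)).
  exact: (iffLR (shell_typeIE z) z_shell).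
by split=> [i|j]; rewrite ?rr_z ?pp_z mul_conjC_ge0.
Qed.

Lemma in_hilbert_image_of_relations rr pp qq :
  (forall i, 0 < a i)%N -> hilbert_relations rr pp qq -> in_hilbert_image rr pp qq.
Proof.
move=> a_gt0 [pp_herm [pp_minor [_ [_ [_ [rel6 [moment [rr_ge0 pp_ge0]]]]]]]].
have [w pp_w] := psd_rank1_factor pp_herm (fun g h i j => subr0_eq (pp_minor g h i j)) pp_ge0.
pose c i := sqrtC (rr i).
have rr_c i : rr i = c i * (c i)^* by rewrite geC0_conj ?sqrtC_ge0 // -expr2 sqrtCK.
have qq_mul_conj s s' : admissible a s -> admissible a s' ->
    qq s * (qq s')^* = qinv a n (zcat c w) s * (qinv a n (zcat c w) s')^*.
  move=> As As'; have [gs gs_s] := exists_fiber_card As.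
  have [hs hs_s'] := exists_fiber_card As'.
  rewrite -(qinv_mul_conj _ gs_s hs_s') -(subr0_eq (rel6 gs hs s s' As As' gs_s hs_s')).
  by congr (_ * _); apply: eq_bigr => *; rewrite ?rinv_zcat ?pinv_zcat ?rr_c ?pp_w.
have alpha_gt0 := alphaA_gt0 a_gt0.
have [u u1 qq_u] := phase_of_mul_conj qq_mul_conj (qinv_eq0_dichotomy _ alpha_gt0).
pose mu := (alphaA a).-root u.
have mu_unit : mu * mu^* = 1 by rewrite -normCK norm_rootC u1 rootC1 ?expr1n.
pose z := zcat c (fun j => mu * w j).
have rr_z i : rr i = rinv z i by rewrite rinv_zcat.
have pp_z i j : pp i j = pinv z i j by rewrite pinv_zcat rmorphM mulrACA mu_unit mul1r.
exists z; split; [|split; [exact: rr_z | split; [exact: pp_z |]]].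
  apply/shell_typeIE => i; rewrite -rr_z -(eq_bigr _ (fun j _ => pp_z j j)).
  exact: moment.
move=> s As; rewrite qq_u // !qinv_zcat monomialZ As rootCK //; ring.
Qed.

End TypeI.

Unset Implicit Arguments.
Set Strict Implicit.

Theorem proposition4p4 (C : numClosedFieldType) (l k : nat) (a n : 'I_l -> nat)
  (a_pos : forall i, (0 < a i)%N) (n_pos : forall i, (0 < n i)%N)
  (faithful : faithful_rep C (typeI_matrix k a n))
  (rr : 'I_l -> C) (pp : 'I_k -> 'I_k -> C) (qq : ('I_k -> nat) -> C) :
  (exists z : 'I_(l + k) -> C,
      shell (typeI_matrix k a n) z /\
      (forall i, rr i = rinv z i) /\
      (forall i j, pp i j = pinv z i j) /\
      (forall s, admissible a s -> qq s = qinv a n z s))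
  <->
  (   (forall i j, pp i j = (pp j i)^*) /\
      (* (1) *)
      (forall g h i j, pp g h * pp i j - pp g j * pp i h = 0) /\
      (* (2) *)
      (forall (g h i : 'I_k) (s s' : 'I_k -> nat), admissible a s -> admissible a s' ->
        s' g = (s g).+1 -> s i = (s' i).+1 ->
        (forall x, x != g -> x != i -> s' x = s x) ->
        pp g h * qq s - pp i h * qq s' = 0) /\
      (* (3) *)
      (forall (g h i : 'I_k) (s s' : 'I_k -> nat), admissible a s -> admissible a s' ->
        s' h = (s h).+1 -> s i = (s' i).+1 ->
        (forall x, x != h -> x != i -> s' x = s x) ->
        pp g h * (qq s)^* - pp g i * (qq s')^* = 0) /\
      (* (4) and (5) *)
      (forall s s' t t' : 'I_k -> nat,
        admissible a s -> admissible a s' -> admissible a t -> admissible a t' ->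
        (forall x, (s x + s' x = t x + t' x)%N) ->
        qq s * qq s' - qq t * qq t' = 0 /\
        (qq s)^* * (qq s')^* - (qq t)^* * (qq t')^* = 0) /\
      (* (6) *)
      (forall (gs hs : 'I_(alphaA a) -> 'I_k) (s s' : 'I_k -> nat),
        admissible a s -> admissible a s' ->
        (forall x, s x = #|[pred j | gs j == x]|) ->
        (forall x, s' x = #|[pred j | hs j == x]|) ->
        (\prod_(i < l) rr i ^+ mA a n i) * (\prod_(j < alphaA a) pp (gs j) (hs j))
          - qq s * (qq s')^* = 0) /\
      (forall i, - (a i)%:R * rr i + (n i)%:R * (\sum_(j < k) pp j j) = 0) /\
      (forall i, 0 <= rr i) /\ (forall j, 0 <= pp j j)).
Proof.
split; first exact: hilbert_relations_of_image.
exact: in_hilbert_image_of_relations a_pos.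
Qed.
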